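(* Let $A\in\mathbb C^{m\times n}$ with $m<n$ have full rank. For every $1\le q\le\infty$, $A^\dagger\in\mathrm{ginv}_{\mathrm{col}(2,q)}(A)$ and $A^\dagger\in\mathrm{pginv}_{\mathrm{col}(2,q)}(A)$. For $1\le q<\infty$ both sets equal $\{A^\dagger\}$. For $q=\infty$ they need not be singletons: there exist full-rank $A$ for which $\mathrm{ginv}_{\mathrm{col}(2,\infty)}(A)$ contains elements other than $A^\dagger$ (e.g. $A=\begin{bmatrix}\eta^{-1}&0&0\\0&1&0\end{bmatrix}$ with $0<\eta<1$), and full-rank $A$ for which $\mathrm{pginv}_{\mathrm{col}(2,\infty)}(A)$ contains elements other than $A^\dagger$.
   Context: For $M$ with columns $m_j$: $\|M\|_{\mathrm{col}(p,q)}=(\sum_j\|m_j\|_p^q)^{1/q}$ (maximum over $j$ for $q=\infty$). $\mathcal G(A)=\{X:AX=I_m\}$; $\mathrm{ginv}_\nu(A)=\arg\min_{X\in\mathcal G(A)}\|X\|_\nu$, $\mathrm{pginv}_\nu(A)=\arg\min_{X\in\mathcal G(A)}\|XA\|_\nu$ (sets). $A^\dagger=A^H(AA^H)^{-1}$. *)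

From Stdlib Require Import Reals Lra ClassicalEpsilon.
Open Scope R_scope.

Definition C := (R * R)%type.
Definition C0 : C := (0, 0).
Definition C1 : C := (1, 0).
Definition Cadd (z w : C) : C := (fst z + fst w, snd z + snd w).
Definition Cmul (z w : C) : C :=
  (fst z * fst w - snd z * snd w, fst z * snd w + snd z * fst w).
Definition Cconj (z : C) : C := (fst z, - snd z).
Definition Cmod2 (z : C) : R := fst z * fst z + snd z * snd z.

Fixpoint csum (n : nat) (f : nat -> C) : C :=
  match n with O => C0 | S k => Cadd (csum k f) (f k) end.
Fixpoint rsum (n : nat) (f : nat -> R) : R :=
  match n with O => 0 | S k => rsum k f + f k end.
Fixpoint rmax (n : nat) (f : nat -> R) : R :=
  match n with O => 0 | S k => Rmax (rmax k f) (f k) end.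

(* Matrices: entries indexed by nat; dimensions are carried separately and
   only entries with indices in range are ever relevant. *)
Definition mat := nat -> nat -> C.

Definition mmul (p : nat) (M N : mat) : mat :=
  fun i k => csum p (fun j => Cmul (M i j) (N j k)).
Definition conjtr (M : mat) : mat := fun i j => Cconj (M j i).
Definition idm : mat := fun i j => if Nat.eqb i j then C1 else C0.

Definition meq (r c : nat) (M N : mat) : Prop :=
  forall i j, (i < r)%nat -> (j < c)%nat -> M i j = N i j.

Definition is_inv (m : nat) (M B : mat) : Prop :=
  meq m m (mmul m M B) idm /\ meq m m (mmul m B M) idm.
(* the inverse of an m x m matrix (meaningful when it exists) *)
Definition minv (m : nat) (M : mat) : mat :=
  epsilon (inhabits (fun _ _ => C0)) (is_inv m M).

Definition pinv (m n : nat) (A : mat) : mat :=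
  mmul m (conjtr A) (minv m (mmul n A (conjtr A))).

(* full rank for m x n with m < n: the rows are linearly independent *)
Definition full_row_rank (m n : nat) (A : mat) : Prop :=
  forall c : nat -> C,
    (forall j, (j < n)%nat -> csum m (fun i => Cmul (c i) (A i j)) = C0) ->
    forall i, (i < m)%nat -> c i = C0.

Definition Gset (m n : nat) (A X : mat) : Prop := meq m m (mmul n A X) idm.

Inductive ext := Fin (q : R) | Inf.
Definition valid_exp (q : ext) : Prop :=
  match q with Fin q => 1 <= q | Inf => True end.

(* x^q for x >= 0, with 0^q = 0 *)
Definition rpow (x q : R) : R :=
  if Req_EM_T x 0 then 0 else Rpower x q.

Definition colnorm2 (r : nat) (M : mat) (j : nat) : R :=
  sqrt (rsum r (fun i => Cmod2 (M i j))).

Definition colnorm (r c : nat) (q : ext) (M : mat) : R :=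
  match q with
  | Fin q => rpow (rsum c (fun j => rpow (colnorm2 r M j) q)) (/ q)
  | Inf => rmax c (fun j => colnorm2 r M j)
  end.

Definition in_ginv (m n : nat) (q : ext) (A X : mat) : Prop :=
  Gset m n A X /\
  forall Y, Gset m n A Y -> colnorm n m q X <= colnorm n m q Y.

Definition in_pginv (m n : nat) (q : ext) (A X : mat) : Prop :=
  Gset m n A X /\
  forall Y, Gset m n A Y ->
    colnorm n n q (mmul m X A) <= colnorm n n q (mmul m Y A).

Definition Aeta (eta : R) : mat :=
  fun i j => match i, j with
             | O, O => (/ eta, 0)
             | 1%nat, 1%nat => C1
             | _, _ => C0
             end.

(* Every Y in G(A) splits as Y = A^+ + Z with A Z = 0.  The columns of
   A^+ = A^H (A A^H)^-1 lie in the range of A^H, which is orthogonal to the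
   kernel of A, so each column of Y has squared norm equal to that of the
   corresponding column of A^+ plus that of Z; the same holds for
   Y A = A^+ A + Z A, since A (Z A) = 0 as well.  A col(2,q) norm is monotone
   in the column norms, so A^+ minimises both ||Y|| and ||Y A||; for finite q
   it is strictly monotone in each column, which forces Z = 0 (resp. Z A = 0,
   hence Z = 0 by full rank).  For q = oo only the largest column counts, so a
   smaller column can be moved off the range of A^H without changing the norm. *)

From Stdlib Require Import Reals Lra Lia Ring ClassicalEpsilon.
From Pilot Require Import Defs.
From mathcomp Require all_boot all_algebra Rstruct.
From mathcomp.real_closed Require complex.
Open Scope R_scope.

(* Invertibility is transported from MathComp's matrices over [Rcomplex R]. *)
Module SquareInverse.
Import all_boot all_algebra Rstruct complex GRing.Theory.
Local Open Scope ring_scope.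
Local Notation CC := (Rcomplex R).

Definition embC (z : Defs.C) : CC := Complex (fst z) (snd z).
Definition projC (z : CC) : Defs.C := (Re z, Im z).

Lemma embCK z : projC (embC z) = z. Proof. by case: z. Qed.
Lemma projCK z : embC (projC z) = z. Proof. by case: z. Qed.
Lemma embC_inj z w : embC z = embC w -> z = w.
Proof. by move=> /(congr1 projC); rewrite !embCK. Qed.
Lemma embC_add z w : embC (Cadd z w) = embC z + embC w.
Proof. by case: z => a b; case: w. Qed.
Lemma embC_mul z w : embC (Cmul z w) = embC z * embC w.
Proof. by case: z => a b; case: w. Qed.
Lemma embC_csum n f : embC (csum n f) = \sum_(i < n) embC (f i).
Proof.
elim: n => [|n IH] /=; first by rewrite big_ord0.
by rewrite embC_add IH big_ord_recr.
Qed.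

Lemma is_inv_exists m (M : mat) : full_row_rank m m M -> exists B, is_inv m M B.
Proof.
case: m => [|m] FR; first by exists M; split => i j /ltP.
pose Mx : 'M[CC]_m.+1 := \matrix_(i, j) embC (M i j).
have Mx_free : row_free Mx.
  rewrite -kermx_eq0; apply/eqP/row_matrixP => i; rewrite row0.
  set u := row i (kermx Mx).
  have uM : u *m Mx = 0 by apply/sub_kermxP; exact: row_sub.
  pose c k := projC (u 0 (inord k)).
  have u0 : forall k, lt k m.+1 -> c k = Defs.C0.
    apply: FR => j /ltP lj; apply: embC_inj; rewrite embC_csum.
    transitivity ((u *m Mx) 0 (Ordinal lj)); last by rewrite uM !mxE.
    by rewrite mxE; apply: eq_bigr => k _; rewrite embC_mul /c projCK inord_val /Mx !mxE.
  apply/rowP => k; rewrite [RHS]mxE.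
  by have /(congr1 embC) := u0 k (ltP (ltn_ord k)); rewrite /c projCK inord_val.
have Mx_unit : Mx \in unitmx by rewrite -row_free_unit.
have idm_mx : forall i k, (i < m.+1)%N -> (k < m.+1)%N ->
    embC (idm i k) = (1%:M : 'M[CC]_m.+1) (inord i) (inord k).
  move=> i k li lk; rewrite mxE /idm.
  case: Nat.eqb_spec => [->|ne]; first by rewrite eqxx.
  suff /negbTE -> : inord i != inord k :> 'I_m.+1 by [].
  by apply/eqP => /(congr1 val); rewrite /= !inordK.
exists (fun i j => projC (invmx Mx (inord i) (inord j))).
split => i k /ltP li /ltP lk; apply: embC_inj; rewrite embC_csum idm_mx //.
- rewrite -(mulmxV Mx_unit) mxE; apply: eq_bigr => j _.
  by rewrite embC_mul projCK !mxE inordK // inord_val.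
- rewrite -(mulVmx Mx_unit) mxE; apply: eq_bigr => j _.
  by rewrite embC_mul projCK !mxE inordK // inord_val.
Qed.
End SquareInverse.

Definition Copp (z : C) : C := (- fst z, - snd z).
Definition Csub (z w : C) : C := Cadd z (Copp w).

Lemma pair_eq (a b c d : R) : a = c -> b = d -> (a, b) = (c, d).
Proof. intros; subst; reflexivity. Qed.

Ltac csolve := repeat match goal with z : C |- _ => destruct z end;
  unfold Csub, Copp, Cadd, Cmul, Cconj, C0, C1 in *; simpl; apply pair_eq; ring.

Lemma C_ring : ring_theory C0 C1 Cadd Cmul Csub Copp (@eq C).
Proof. split; intros; csolve. Qed.
Add Ring C_ring : C_ring.

Lemma Cconj_add z w : Cconj (Cadd z w) = Cadd (Cconj z) (Cconj w). Proof. csolve. Qed.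
Lemma Cconj_mul z w : Cconj (Cmul z w) = Cmul (Cconj z) (Cconj w). Proof. csolve. Qed.
Lemma Cconj0 : Cconj C0 = C0. Proof. csolve. Qed.

Lemma Csub_eq0 z w : Csub z w = C0 -> z = w.
Proof. intros H. replace z with (Cadd (Csub z w) w) by ring. rewrite H. ring. Qed.

Lemma Cmod2_ge0 z : 0 <= Cmod2 z.
Proof. unfold Cmod2. nra. Qed.
Lemma Cmod2_eq0 z : Cmod2 z = 0 -> z = C0.
Proof. destruct z as [a b]; unfold Cmod2, C0; simpl; intros. apply pair_eq; nra. Qed.
Lemma Cmod2_C1 : Cmod2 C1 = 1.
Proof. unfold Cmod2, C1; simpl; ring. Qed.
Lemma Cmod2_add z w : Cmod2 (Cadd z w) = Cmod2 z + Cmod2 w + 2 * fst (Cmul z (Cconj w)).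
Proof. destruct z, w; unfold Cmod2, Cadd, Cmul, Cconj; simpl; ring. Qed.

Lemma csum_ext n f g : (forall i, (i < n)%nat -> f i = g i) -> csum n f = csum n g.
Proof. induction n; simpl; intros H; auto. rewrite IHn, H; auto. Qed.
Lemma csum_eq0 n f : (forall i, (i < n)%nat -> f i = C0) -> csum n f = C0.
Proof. induction n; simpl; intros H; auto. rewrite IHn, H; auto. ring. Qed.
Lemma csum_add n f g : csum n (fun i => Cadd (f i) (g i)) = Cadd (csum n f) (csum n g).
Proof. induction n; simpl. csolve. rewrite IHn. ring. Qed.
Lemma csum_sub n f g : csum n (fun i => Csub (f i) (g i)) = Csub (csum n f) (csum n g).
Proof. induction n; simpl. csolve. rewrite IHn. ring. Qed.
Lemma csum_mull n c f : csum n (fun i => Cmul c (f i)) = Cmul c (csum n f).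
Proof. induction n; simpl. csolve. rewrite IHn. ring. Qed.
Lemma csum_mulr n c f : csum n (fun i => Cmul (f i) c) = Cmul (csum n f) c.
Proof. induction n; simpl. csolve. rewrite IHn. ring. Qed.
Lemma csum_conj n f : Cconj (csum n f) = csum n (fun i => Cconj (f i)).
Proof. induction n; simpl. csolve. rewrite Cconj_add, IHn. reflexivity. Qed.
Lemma exchange_csum n p f :
  csum n (fun i => csum p (fun j => f i j)) = csum p (fun j => csum n (fun i => f i j)).
Proof.
  induction n; simpl. symmetry; apply csum_eq0; auto.
  rewrite IHn, <- csum_add. reflexivity.
Qed.
Lemma fst_csum n f : fst (csum n f) = rsum n (fun i => fst (f i)).
Proof. induction n; simpl; auto. rewrite IHn. reflexivity. Qed.

Lemma rsum_ext n f g : (forall i, (i < n)%nat -> f i = g i) -> rsum n f = rsum n g.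
Proof. induction n; simpl; intros H; auto. rewrite IHn, H; auto. Qed.
Lemma rsum_add n f g : rsum n (fun i => f i + g i) = rsum n f + rsum n g.
Proof. induction n; simpl. ring. rewrite IHn. ring. Qed.
Lemma rsum_scale n c f : rsum n (fun i => c * f i) = c * rsum n f.
Proof. induction n; simpl. ring. rewrite IHn. ring. Qed.
Lemma rsum_ge0 n f : (forall i, (i < n)%nat -> 0 <= f i) -> 0 <= rsum n f.
Proof. induction n; simpl; intros H. lra. pose proof (H n ltac:(lia)). pose proof (IHn ltac:(auto)). lra. Qed.
Lemma rsum_le n f g : (forall i, (i < n)%nat -> f i <= g i) -> rsum n f <= rsum n g.
Proof. induction n; simpl; intros H. lra. pose proof (H n ltac:(lia)). pose proof (IHn ltac:(auto)). lra. Qed.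
Lemma rsum_ge_term n f i : (forall j, (j < n)%nat -> 0 <= f j) -> (i < n)%nat -> f i <= rsum n f.
Proof.
  induction n; simpl; intros H Hi. lia.
  destruct (Nat.eq_dec i n). subst. pose proof (rsum_ge0 n f ltac:(auto)). lra.
  pose proof (H n ltac:(lia)). pose proof (IHn ltac:(auto) ltac:(lia)). lra.
Qed.
Lemma rsum_le_eq n f g : (forall j, (j < n)%nat -> f j <= g j) -> rsum n g <= rsum n f ->
  forall j, (j < n)%nat -> f j = g j.
Proof.
  induction n; simpl; intros Hfg Hsum j Hj. lia.
  assert (rsum n f <= rsum n g) by (apply rsum_le; auto).
  pose proof (Hfg n ltac:(lia)).
  destruct (Nat.eq_dec j n). subst; lra.
  apply IHn; auto. lra. lia.
Qed.
Lemma rsum_eq0 n f : (forall i, (i < n)%nat -> 0 <= f i) -> rsum n f = 0 ->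
  forall i, (i < n)%nat -> f i = 0.
Proof.
  intros Hf H0 i Hi. symmetry. apply (rsum_le_eq n (fun _ => 0) f); auto.
  rewrite H0, (rsum_ext n (fun _ => 0) (fun i => 0 * f i)), rsum_scale by (intros; ring). lra.
Qed.

Lemma rmax_ext n f g : (forall i, (i < n)%nat -> f i = g i) -> rmax n f = rmax n g.
Proof. induction n; simpl; intros H; auto. rewrite IHn, H; auto. Qed.
Lemma rmax_ge n f j : (j < n)%nat -> f j <= rmax n f.
Proof.
  induction n; simpl; intros H. lia.
  destruct (Nat.eq_dec j n). subst. apply Rmax_r.
  eapply Rle_trans. apply IHn; lia. apply Rmax_l.
Qed.
Lemma rmax_le n f b : 0 <= b -> (forall j, (j < n)%nat -> f j <= b) -> rmax n f <= b.
Proof.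
  induction n; simpl; intros Hb H. lra.
  apply Rmax_lub. apply IHn; auto. apply H; lia.
Qed.
Lemma rmax_mono n f g : (forall j, (j < n)%nat -> f j <= g j) -> rmax n f <= rmax n g.
Proof.
  induction n; simpl; intros H. lra.
  apply Rmax_lub. eapply Rle_trans. apply IHn; auto. apply Rmax_l.
  eapply Rle_trans. apply H; lia. apply Rmax_r.
Qed.

Lemma rpow_ge0 x q : 0 <= rpow x q.
Proof. unfold rpow. destruct Req_EM_T. lra. left; apply exp_pos. Qed.
Lemma rpow_lt x y q : 0 < q -> 0 <= x < y -> rpow x q < rpow y q.
Proof.
  intros Hq [H1 H2]. unfold rpow.
  destruct (Req_EM_T y 0). lra.
  destruct (Req_EM_T x 0). apply exp_pos.
  apply exp_increasing, Rmult_lt_compat_l; auto. apply ln_increasing; lra.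
Qed.
Lemma rpow_le x y q : 0 < q -> 0 <= x <= y -> rpow x q <= rpow y q.
Proof. intros Hq [H1 [H2|<-]]. left; apply rpow_lt; lra. lra. Qed.
Lemma rpow_le_inv x y q : 0 < q -> 0 <= y -> rpow x q <= rpow y q -> x <= y.
Proof.
  intros Hq Hy H. destruct (Rle_dec x y) as [|Hyx]; auto.
  assert (rpow y q < rpow x q) by (apply rpow_lt; lra). lra.
Qed.

Definition msub (M N : mat) : mat := fun i j => Csub (M i j) (N i j).

Definition colsq (r : nat) (M : mat) (j : nat) : R := rsum r (fun i => Cmod2 (M i j)).

Lemma colsq_ge0 r M j : 0 <= colsq r M j.
Proof. apply rsum_ge0; intros; apply Cmod2_ge0. Qed.
Lemma colsq_eq0 r M j : colsq r M j = 0 -> forall i, (i < r)%nat -> M i j = C0.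
Proof.
  intros H i Hi. apply Cmod2_eq0.
  apply (rsum_eq0 r (fun i => Cmod2 (M i j))); auto. intros; apply Cmod2_ge0.
Qed.

Lemma mmul_assoc p q M N K i k :
  mmul p M (mmul q N K) i k = mmul q (mmul p M N) K i k.
Proof.
  unfold mmul.
  rewrite (csum_ext p _ (fun j => csum q (fun l => Cmul (M i j) (Cmul (N j l) (K l k)))))
    by (intros; symmetry; apply csum_mull).
  rewrite exchange_csum. apply csum_ext; intros l _.
  rewrite <- csum_mulr. apply csum_ext; intros; ring.
Qed.
Lemma mmul_msubl p M N K i k :
  mmul p (msub M N) K i k = Csub (mmul p M K i k) (mmul p N K i k).
Proof. unfold mmul, msub. rewrite <- csum_sub. apply csum_ext; intros; ring. Qed.
Lemma mmul_msubr p M N K i k :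
  mmul p M (msub N K) i k = Csub (mmul p M N i k) (mmul p M K i k).
Proof. unfold mmul, msub. rewrite <- csum_sub. apply csum_ext; intros; ring. Qed.
Lemma mmul_meql r p c M M' N : meq r p M M' -> meq r c (mmul p M N) (mmul p M' N).
Proof. intros H i k Hi Hk. apply csum_ext; intros. rewrite H; auto. Qed.
Lemma mmul_meqr r p c M N N' : meq p c N N' -> meq r c (mmul p M N) (mmul p M N').
Proof. intros H i k Hi Hk. apply csum_ext; intros. rewrite H; auto. Qed.

Lemma colnorm_meq r c q M M' : meq r c M M' -> colnorm r c q M = colnorm r c q M'.
Proof.
  intros H. assert (E : forall j, (j < c)%nat -> colnorm2 r M j = colnorm2 r M' j).
  { intros j Hj. unfold colnorm2. f_equal. apply rsum_ext; intros. rewrite H; auto. }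
  destruct q; simpl. f_equal; apply rsum_ext; intros; rewrite E; auto. apply rmax_ext; auto.
Qed.

Lemma colnorm_mono r c q M N : valid_exp q ->
  (forall j, (j < c)%nat -> colsq r M j <= colsq r N j) -> colnorm r c q M <= colnorm r c q N.
Proof.
  intros Hq H. assert (Hs : forall j, (j < c)%nat -> colnorm2 r M j <= colnorm2 r N j)
    by (intros; apply sqrt_le_1_alt, H; auto).
  destruct q as [q|]; simpl in *.
  - apply rpow_le. apply Rinv_0_lt_compat; lra. split.
    + apply rsum_ge0; intros; apply rpow_ge0.
    + apply rsum_le; intros j Hj. apply rpow_le. lra. split; auto. apply sqrt_pos.
  - apply rmax_mono; auto.
Qed.

(* For finite q every column contributes strictly to the norm. *)
Lemma colsq_eq_of_colnorm_le r c q M N : 1 <= q ->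
  (forall j, (j < c)%nat -> colsq r M j <= colsq r N j) ->
  colnorm r c (Fin q) N <= colnorm r c (Fin q) M ->
  forall j, (j < c)%nat -> colsq r M j = colsq r N j.
Proof.
  simpl; intros Hq H Hle j Hj.
  assert (Hs : forall j, (j < c)%nat -> 0 <= colnorm2 r M j <= colnorm2 r N j)
    by (intros; split; [apply sqrt_pos | apply sqrt_le_1_alt, H; auto]).
  apply rpow_le_inv in Hle; [| apply Rinv_0_lt_compat; lra
                             | apply rsum_ge0; intros; apply rpow_ge0].
  assert (Eq : colnorm2 r M j = colnorm2 r N j).
  { pose proof (Hs j Hj). apply Rle_antisym. lra. apply (rpow_le_inv _ _ q). lra. lra.
    right; symmetry.
    apply (rsum_le_eq c (fun j => rpow (colnorm2 r M j) q) (fun j => rpow (colnorm2 r N j) q));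
      auto. intros; apply rpow_le; auto. lra. }
  apply sqrt_inj; auto using colsq_ge0.
Qed.

Lemma colnorm_Inf_ge_entry r c M i j : (i < r)%nat -> (j < c)%nat ->
  sqrt (Cmod2 (M i j)) <= colnorm r c Inf M.
Proof.
  intros Hi Hj. eapply Rle_trans; [|apply (rmax_ge c _ j Hj)].
  apply sqrt_le_1_alt, (rsum_ge_term r (fun i => Cmod2 (M i j))); auto.
  intros; apply Cmod2_ge0.
Qed.
Lemma colnorm_Inf_le r c M b : 0 <= b ->
  (forall j, (j < c)%nat -> colsq r M j <= b ^ 2) -> colnorm r c Inf M <= b.
Proof.
  intros Hb H. apply rmax_le; auto. intros j Hj.
  rewrite <- (sqrt_pow2 b Hb). apply sqrt_le_1_alt, H; auto.
Qed.

(** * Orthogonal splitting of the elements of G(A) *)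

Lemma colsq_pythagoras r (X P Z : mat) j :
  (forall i, (i < r)%nat -> X i j = Cadd (P i j) (Z i j)) ->
  csum r (fun i => Cmul (P i j) (Cconj (Z i j))) = C0 ->
  colsq r X j = colsq r P j + colsq r Z j.
Proof.
  intros HX Horth. unfold colsq.
  rewrite (rsum_ext r _ (fun i => (Cmod2 (P i j) + Cmod2 (Z i j))
                                   + 2 * fst (Cmul (P i j) (Cconj (Z i j)))))
    by (intros; rewrite HX by auto; apply Cmod2_add).
  rewrite !rsum_add, rsum_scale, <- fst_csum, Horth. simpl. ring.
Qed.

Lemma range_adjoint_orth m n A W Z j k :
  (forall p, (p < m)%nat -> mmul n A Z p k = C0) ->
  csum n (fun i => Cmul (mmul m (conjtr A) W i j) (Cconj (Z i k))) = C0.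
Proof.
  intros HAZ.
  rewrite (csum_ext n _ (fun i => csum m (fun p => Cmul (W p j) (Cconj (Cmul (A p i) (Z i k))))))
    by (intros; unfold mmul, conjtr; rewrite <- csum_mulr;
        apply csum_ext; intros; rewrite Cconj_mul; ring).
  rewrite exchange_csum. apply csum_eq0; intros p Hp.
  rewrite csum_mull, <- csum_conj. fold (mmul n A Z p k). rewrite HAZ, Cconj0 by auto. ring.
Qed.

Definition gram (n : nat) (A : mat) : mat := mmul n A (conjtr A).

(* c^T (A A^H) c^* = ||c^T A||^2, so c^T (A A^H) = 0 forces c^T A = 0. *)
Lemma gram_full_row_rank m n A : full_row_rank m n A -> full_row_rank m m (gram n A).
Proof.
  intros FR c Hc.
  set (v := fun k => csum m (fun i => Cmul (c i) (A i k))).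
  assert (Hv : csum n (fun k => Cmul (v k) (Cconj (v k)))
             = csum m (fun j => Cmul (csum m (fun i => Cmul (c i) (gram n A i j))) (Cconj (c j)))).
  { rewrite (csum_ext m _ (fun j => csum n (fun k => Cmul (v k) (Cconj (Cmul (c j) (A j k)))))).
    - rewrite exchange_csum. apply csum_ext; intros k _. rewrite csum_mull, <- csum_conj. reflexivity.
    - intros j _.
      assert (E : csum m (fun i => Cmul (c i) (gram n A i j))
                  = csum n (fun k => Cmul (v k) (Cconj (A j k))))
        by exact (mmul_assoc m n (fun _ i => c i) A (conjtr A) 0%nat j).
      rewrite E, <- csum_mulr. apply csum_ext; intros; rewrite Cconj_mul; ring. }
  rewrite (csum_eq0 m) in Hv by (intros j Hj; rewrite Hc by auto; ring).
  apply FR. intros j Hj. apply Cmod2_eq0.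
  apply (rsum_eq0 n (fun k => Cmod2 (v k))); auto. intros; apply Cmod2_ge0.
  rewrite (rsum_ext n _ (fun k => fst (Cmul (v k) (Cconj (v k)))))
    by (intros; unfold Cmod2, Cmul, Cconj; simpl; ring).
  rewrite <- fst_csum, Hv. reflexivity.
Qed.

Lemma pinv_Gset m n A : full_row_rank m n A -> Gset m n A (pinv m n A).
Proof.
  intros FR i k Hi Hk. unfold pinv. rewrite mmul_assoc.
  assert (Hinv : is_inv m (gram n A) (minv m (gram n A))).
  { unfold minv. apply epsilon_spec, SquareInverse.is_inv_exists, gram_full_row_rank; auto. }
  apply Hinv; auto.
Qed.

Lemma Gset_msub_kernel m n A X Y : Gset m n A X -> Gset m n A Y ->
  forall p k, (p < m)%nat -> (k < m)%nat -> mmul n A (msub Y X) p k = C0.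
Proof. intros GX GY p k Hp Hk. rewrite mmul_msubr, GX, GY by auto. ring. Qed.

Lemma colsq_Gset_split m n A Y : full_row_rank m n A -> Gset m n A Y ->
  forall j, (j < m)%nat ->
  colsq n Y j = colsq n (pinv m n A) j + colsq n (msub Y (pinv m n A)) j.
Proof.
  intros FR GY j Hj. apply colsq_pythagoras.
  - intros; unfold msub; ring.
  - apply range_adjoint_orth. intros p Hp.
    apply (Gset_msub_kernel m n A); auto using pinv_Gset.
Qed.

Lemma colsq_Gset_mul_split m n A Y : full_row_rank m n A -> Gset m n A Y ->
  forall j, (j < n)%nat ->
  colsq n (mmul m Y A) j
  = colsq n (mmul m (pinv m n A) A) j + colsq n (mmul m (msub Y (pinv m n A)) A) j.
Proof.
  intros FR GY j Hj. apply colsq_pythagoras.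
  - intros. rewrite mmul_msubl. ring.
  - rewrite (csum_ext n _ (fun i => Cmul (mmul m (conjtr A) (mmul m (minv m (gram n A)) A) i j)
                                         (Cconj (mmul m (msub Y (pinv m n A)) A i j))))
      by (intros; unfold pinv; rewrite mmul_assoc; reflexivity).
    apply range_adjoint_orth. intros p Hp.
    rewrite mmul_assoc. apply csum_eq0; intros l Hl.
    rewrite (Gset_msub_kernel m n A) by auto using pinv_Gset. ring.
Qed.

(** * Optimality and uniqueness of the pseudo-inverse *)

Lemma pinv_in_ginv m n q A : full_row_rank m n A -> valid_exp q -> in_ginv m n q A (pinv m n A).
Proof.
  intros FR Hq. split; [apply pinv_Gset; auto|]. intros Y GY.
  apply colnorm_mono; auto. intros j Hj.
  rewrite (colsq_Gset_split m n A Y FR GY j Hj). pose proof (colsq_ge0 n (msub Y (pinv m n A)) j). lra.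
Qed.

Lemma pinv_in_pginv m n q A : full_row_rank m n A -> valid_exp q -> in_pginv m n q A (pinv m n A).
Proof.
  intros FR Hq. split; [apply pinv_Gset; auto|]. intros Y GY.
  apply colnorm_mono; auto. intros j Hj.
  rewrite (colsq_Gset_mul_split m n A Y FR GY j Hj).
  pose proof (colsq_ge0 n (mmul m (msub Y (pinv m n A)) A) j). lra.
Qed.

Lemma in_ginv_Fin_pinv m n q A X : full_row_rank m n A -> 1 <= q ->
  in_ginv m n (Fin q) A X -> meq n m X (pinv m n A).
Proof.
  intros FR Hq [GX Hmin] i j Hi Hj. apply Csub_eq0.
  assert (Hsplit := colsq_Gset_split m n A X FR GX).
  assert (Heq : forall j, (j < m)%nat -> colsq n (pinv m n A) j = colsq n X j).
  { apply (colsq_eq_of_colnorm_le n m q); auto using pinv_Gset.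
    intros k Hk; rewrite Hsplit by auto. pose proof (colsq_ge0 n (msub X (pinv m n A)) k). lra. }
  apply (colsq_eq0 n (msub X (pinv m n A)) j); auto.
  pose proof (Hsplit j Hj). pose proof (Heq j Hj). lra.
Qed.

Lemma in_pginv_Fin_pinv m n q A X : full_row_rank m n A -> 1 <= q ->
  in_pginv m n (Fin q) A X -> meq n m X (pinv m n A).
Proof.
  intros FR Hq [GX Hmin] i j Hi Hj. apply Csub_eq0.
  assert (Hsplit := colsq_Gset_mul_split m n A X FR GX).
  assert (Heq : forall k, (k < n)%nat -> colsq n (mmul m (pinv m n A) A) k = colsq n (mmul m X A) k).
  { apply (colsq_eq_of_colnorm_le n n q); auto using pinv_Gset.
    intros k Hk; rewrite Hsplit by auto.
    pose proof (colsq_ge0 n (mmul m (msub X (pinv m n A)) A) k). lra. }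
  apply (FR (msub X (pinv m n A) i)); auto. intros k Hk.
  apply (colsq_eq0 n (mmul m (msub X (pinv m n A)) A) k); auto.
  pose proof (Hsplit k Hk). pose proof (Heq k Hk). lra.
Qed.

Lemma in_ginv_meq m n q A X Y : in_ginv m n q A Y -> meq n m X Y -> in_ginv m n q A X.
Proof.
  intros [GY Hmin] E. split.
  - intros i k Hi Hk. rewrite (mmul_meqr m n m A X Y E) by auto. apply GY; auto.
  - intros Z GZ. rewrite (colnorm_meq n m q X Y E). apply Hmin; auto.
Qed.

Lemma in_pginv_meq m n q A X Y : in_pginv m n q A Y -> meq n m X Y -> in_pginv m n q A X.
Proof.
  intros [GY Hmin] E. split.
  - intros i k Hi Hk. rewrite (mmul_meqr m n m A X Y E) by auto. apply GY; auto.
  - intros Z GZ. rewrite (colnorm_meq n n q (mmul m X A) (mmul m Y A)) by (apply mmul_meql; auto).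
    apply Hmin; auto.
Qed.

(** * Non-uniqueness for q = oo *)

Lemma Aeta_full_row_rank eta : 0 < eta -> full_row_rank 2 3 (Aeta eta).
Proof.
  intros He c Hc i Hi.
  assert (H0 := Hc 0%nat ltac:(lia)). assert (H1 := Hc 1%nat ltac:(lia)).
  unfold Aeta in H0, H1. cbn [csum] in H0, H1.
  assert (Hinv : / eta <> 0) by (apply Rinv_neq_0_compat; lra).
  destruct (c 0%nat) as [a b] eqn:Ec0, (c 1%nat) as [x y] eqn:Ec1.
  unfold Cadd, Cmul, C0, C1 in H0, H1; simpl in H0, H1.
  injection H0; injection H1; intros.
  destruct i as [|[|i]]; [| |lia]; rewrite ?Ec0, ?Ec1; unfold C0; apply pair_eq; try lra.
  - apply (Rmult_eq_reg_r (/ eta)); auto; lra.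
  - apply (Rmult_eq_reg_r (/ eta)); auto; lra.
Qed.

(* A^+ = diag(eta, 1) padded by a zero row; moving part of its first column to
   the null direction e_3 keeps that column shorter than the second one. *)
Definition Xeta (eta : R) : mat :=
  fun i j => match i, j with
             | O, O => (eta, 0)
             | 1%nat, 1%nat => C1
             | 2%nat, O => (1 - eta, 0)
             | _, _ => C0
             end.

Lemma Xeta_in_ginv_Inf eta : 0 < eta < 1 -> in_ginv 2 3 Inf (Aeta eta) (Xeta eta).
Proof.
  intros He. split.
  - intros i k Hi Hk. unfold mmul, idm, Aeta, Xeta.
    destruct i as [|[|i]]; [| |lia]; destruct k as [|[|k]]; try lia; cbn;
      unfold Cadd, Cmul, C0, C1; simpl; apply pair_eq; field; lra.
  - intros Y GY. apply Rle_trans with 1.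
    + apply colnorm_Inf_le; [lra|]. intros j Hj.
      destruct j as [|[|j]]; [| |lia]; unfold colsq, Xeta; cbn [rsum];
        unfold Cmod2, C0, C1; simpl; nra.
    + assert (Y11 : Y 1%nat 1%nat = C1).
      { change C1 with (idm 1%nat 1%nat). rewrite <- (GY 1%nat 1%nat) by lia. unfold mmul, Aeta. cbn [csum]. ring. }
      rewrite <- sqrt_1, <- Cmod2_C1, <- Y11. apply colnorm_Inf_ge_entry; lia.
Qed.

(* The third row of A^H, hence of A^+, vanishes; no need to compute the inverse. *)
Lemma Xeta_neq_pinv eta : 0 < eta < 1 -> ~ meq 3 2 (Xeta eta) (pinv 2 3 (Aeta eta)).
Proof.
  intros He E. specialize (E 2%nat 0%nat ltac:(lia) ltac:(lia)).
  replace (pinv 2 3 (Aeta eta) 2%nat 0%nat) with C0 in E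
    by (unfold pinv, mmul, conjtr, Aeta; cbn [csum]; rewrite !Cconj0; ring).
  unfold Xeta, C0 in E. injection E. lra.
Qed.

Definition Apg : mat :=
  fun i j => match i, j with
             | O, O => C1 | 1%nat, 1%nat => C1 | 1%nat, 2%nat => C1 | _, _ => C0
             end.
Definition Xpg : mat :=
  fun i j => match i, j with
             | O, O => C1 | 1%nat, 1%nat => C1 | _, _ => C0
             end.

Lemma Apg_full_row_rank : full_row_rank 2 3 Apg.
Proof.
  intros c Hc i Hi.
  assert (H0 := Hc 0%nat ltac:(lia)). assert (H1 := Hc 1%nat ltac:(lia)).
  unfold Apg in H0, H1. cbn [csum] in H0, H1.
  destruct i as [|[|i]]; [| |lia]; [rewrite <- H0 | rewrite <- H1]; ring.
Qed.

Lemma Xpg_in_pginv_Inf : in_pginv 2 3 Inf Apg Xpg.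
Proof.
  split.
  - intros i k Hi Hk. unfold mmul, idm, Apg, Xpg.
    destruct i as [|[|i]]; [| |lia]; destruct k as [|[|k]]; try lia; cbn [csum Nat.eqb]; ring.
  - intros Y GY. apply Rle_trans with 1.
    + apply colnorm_Inf_le; [lra|]. intros j Hj.
      destruct j as [|[|[|j]]]; [| | |lia]; unfold colsq, mmul, Xpg, Apg; cbn [rsum csum];
        unfold Cmod2, Cadd, Cmul, C0, C1; simpl; nra.
    + assert (YA00 : mmul 2 Y Apg 0%nat 0%nat = C1).
      { change C1 with (idm 0%nat 0%nat). rewrite <- (GY 0%nat 0%nat) by lia. unfold mmul, Apg. cbn [csum]. ring. }
      rewrite <- sqrt_1, <- Cmod2_C1, <- YA00. apply colnorm_Inf_ge_entry; lia.
Qed.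

(* Columns 2 and 3 of Apg coincide, so rows 2 and 3 of A^+ do, but not of Xpg. *)
Lemma Xpg_neq_pinv : ~ meq 3 2 Xpg (pinv 2 3 Apg).
Proof.
  intros E.
  assert (P : pinv 2 3 Apg 1%nat 1%nat = pinv 2 3 Apg 2%nat 1%nat)
    by (unfold pinv, mmul, conjtr, Apg; cbn [csum]; reflexivity).
  rewrite <- (E 1%nat 1%nat), <- (E 2%nat 1%nat) in P by lia.
  unfold Xpg, C1, C0 in P. injection P. lra.
Qed.

Theorem corollary2 :
  (forall (m n : nat) (A : mat) (q : ext),
      (m < n)%nat -> full_row_rank m n A -> valid_exp q ->
      in_ginv m n q A (pinv m n A) /\ in_pginv m n q A (pinv m n A)) /\
  (forall (m n : nat) (A : mat) (q : R),
      (m < n)%nat -> full_row_rank m n A -> 1 <= q ->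
      forall X : mat,
        (in_ginv m n (Fin q) A X <-> meq n m X (pinv m n A)) /\
        (in_pginv m n (Fin q) A X <-> meq n m X (pinv m n A))) /\
  (forall eta : R, 0 < eta < 1 ->
      full_row_rank 2 3 (Aeta eta) /\
      exists X : mat, in_ginv 2 3 Inf (Aeta eta) X /\
                      ~ meq 3 2 X (pinv 2 3 (Aeta eta))) /\
  (exists (m n : nat) (A : mat),
      (m < n)%nat /\ full_row_rank m n A /\
      exists X : mat, in_pginv m n Inf A X /\ ~ meq n m X (pinv m n A)).
Proof.
  split; [|split; [|split]].
  - intros m n A q _ FR Hq. split; [apply pinv_in_ginv | apply pinv_in_pginv]; auto.
  - intros m n A q _ FR Hq X. assert (Hq' : valid_exp (Fin q)) by exact Hq.
    split; split.
    + apply in_ginv_Fin_pinv; auto.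
    + intros E. apply (in_ginv_meq _ _ _ _ _ _ (pinv_in_ginv m n _ A FR Hq') E).
    + apply in_pginv_Fin_pinv; auto.
    + intros E. apply (in_pginv_meq _ _ _ _ _ _ (pinv_in_pginv m n _ A FR Hq') E).
  - intros eta He. split; [apply Aeta_full_row_rank; lra|].
    exists (Xeta eta). split; [apply Xeta_in_ginv_Inf | apply Xeta_neq_pinv]; auto.
  - exists 2%nat, 3%nat, Apg. split; [lia|split; [exact Apg_full_row_rank|]].
    exists Xpg. split; [exact Xpg_in_pginv_Inf | exact Xpg_neq_pinv].
Qed.
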